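(* Let $H$ be a real symmetric positive definite $d\times d$ matrix and $L$ a real $d\times d$ matrix with $L^TH+HL=0$. Let $s>4$ be even and consider the $s$-stage explicit Runge–Kutta method applied to $\frac{d}{dt}u=Lu$, $u_{n+1}=G_s u_n$ with $G_s=\sum_{k=0}^s a_k(hL)^k$, $a_0=1$, where $a_k=\frac{1}{k!}$ for $k=1,\dots,s-2$, $a_{s-1}=\frac{3}{(s+2)!}-\frac{3}{(s+1)!}+\frac{1}{(s-1)!}$, and $a_s=\frac{3}{(s+2)!}-\frac{3}{(s+1)!}+\frac{1}{s!}$. Then the method has order $p=s-2$ and order of energy accuracy $r=s+3$.
   Context: The order $p$ of the method is the largest integer such that $a_k=1/k!$ for all $1\le k\le p$. For $0\le k\le s$, $b_k=\sum_{i=\max(0,2k-s)}^{\min(2k,s)}(-1)^{k+i}a_i a_{2k-i}$, so that the energy $\mathcal{E}=\tfrac12\langle u,Hu\rangle$ satisfies $\mathcal{E}_{n+1}=\mathcal{E}_n+\tfrac12\sum_{k=1}^s b_k h^{2k}\|L^k u_n\|_H^2$. The leading index $m$ is the smallest $k\ge1$ with $b_k\ne0$ and the order of energy accuracy is $r=2m-1$. *)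

From mathcomp Require Import all_boot all_order all_algebra.
Set Implicit Arguments. Unset Strict Implicit. Unset Printing Implicit Defensive.
Import Order.TTheory GRing.Theory Num.Theory.
Local Open Scope ring_scope.

Definition rk_coef (R : realFieldType) (s k : nat) : R :=
  if k == 0%N then 1
  else if (k <= s - 2)%N then (k`!)%:R^-1
  else if k == s.-1 then 3 / (s.+2`!)%:R - 3 / (s.+1`!)%:R + (s.-1`!)%:R^-1
  else if k == s then 3 / (s.+2`!)%:R - 3 / (s.+1`!)%:R + (s`!)%:R^-1
  else 0.

(* p is the order: the largest integer p (0 <= p <= s) such that a_k = 1/k!
   for all 1 <= k <= p. *)
Definition is_order (R : realFieldType) (a : nat -> R) (s p : nat) : Prop :=
  [/\ (p <= s)%N,
      (forall k, (1 <= k <= p)%N -> a k = (k`!)%:R^-1)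
    & ((p < s)%N -> a p.+1 <> (p.+1`!)%:R^-1)].

Definition bcoef (R : realFieldType) (a : nat -> R) (s k : nat) : R :=
  \sum_(maxn 0 (k.*2 - s) <= i < (minn k.*2 s).+1)
     (-1) ^+ (k + i) * a i * a (k.*2 - i)%N.

Definition is_energy_accuracy (R : realFieldType) (a : nat -> R) (s r : nat) : Prop :=
  exists m : nat,
    [/\ (1 <= m <= s)%N, bcoef a s m <> 0,
        (forall k, (1 <= k < m)%N -> bcoef a s k = 0)
      & r = (m.*2 - 1)%N].

From mathcomp Require Import all_boot all_order all_algebra.
From mathcomp Require Import ring lra zify.
Set Implicit Arguments. Unset Strict Implicit. Unset Printing Implicit Defensive.
Import Order.TTheory GRing.Theory Num.Theory.
Local Open Scope ring_scope.

(* Write a_k = 1/k! + d_k: the defect d vanishes below s-1, d_(s-1) = d_s = c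
   and d_k = -1/k! beyond s.  With S_N := sum_i (-1)^i a_i a_(N-i) one has
   b_k = (-1)^k S_(2k).  Since exp(z) exp(-z) = 1, the exact coefficients
   contribute nothing to S_N for N > 0, and for even N < 2(s-1) the defect
   enters only linearly: S_N = 2 sum_i (-1)^i d_(N-i) / i!, a sum of N-s+2
   terms.  It vanishes for N <= s-2 trivially, for N = s because
   d_(s-1) = d_s, and for N = s+2 by the choice of c; for N = s+4 it equals
   2(s-1)/(15 (s+2)(s+4) s!) > 0.  The order claim is c <> 0.  For s = 6,
   N = s+4 = 2(s-1) lies outside that range and S_10 is evaluated directly. *)

Section AlternatingConvolution.
Variable R : realFieldType.
Implicit Types (a b c d : nat -> R) (n N : nat).

Lemma natr_fact_neq0 n : (n`!)%:R != 0 :> R.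
Proof. by rewrite pnatr_eq0 -lt0n fact_gt0. Qed.

Definition exp_coef n : R := (n`!)%:R^-1.

Lemma exp_coef0 : exp_coef 0 = 1.
Proof. by rewrite /exp_coef fact0 invr1. Qed.

Lemma exp_coefS n : exp_coef n.+1 = exp_coef n / n.+1%:R.
Proof. by rewrite /exp_coef factS natrM invfM mulrC. Qed.

Definition alt_conv a b N : R := \sum_(i < N.+1) (-1) ^+ i * a i * b (N - i)%N.

Lemma alt_conv_exp_coef N : (0 < N)%N -> alt_conv exp_coef exp_coef N = 0.
Proof.
move=> N_gt0; apply: (mulfI (natr_fact_neq0 N)); rewrite mulr0.
transitivity ((1 - 1 : R) ^+ N); last by rewrite subrr expr0n gtn_eqF.
rewrite exprBn mulr_sumr; apply: eq_bigr => i _.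
rewrite !expr1n !mulr1 -[RHS]mulr_natr /exp_coef mulrCA -mulrA; congr (_ * _).
have := congr1 (GRing.natmul (1 : R)) (bin_fact (leq_ord i)).
rewrite !natrM => <-.
by field; rewrite !natr_fact_neq0.
Qed.

Lemma alt_convC a b N : alt_conv b a N = (-1) ^+ N * alt_conv a b N.
Proof.
rewrite /alt_conv (reindex_inj rev_ord_inj) mulr_sumr; apply: eq_bigr => i _ /=.
rewrite subSS subKn ?leq_ord //; move: (leq_ord i); move: (i : nat) => j j_le.
rewrite -[in (-1) ^+ N](subnK j_le) exprD -!mulrA; congr (_ * _).
by rewrite signrMK mulrC.
Qed.

Lemma alt_convDl a b c N :
  alt_conv (fun i => a i + b i) c N = alt_conv a c N + alt_conv b c N.
Proof. by rewrite /alt_conv -big_split; apply: eq_bigr => i _ /=; ring. Qed.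

Lemma alt_convDr a b c N :
  alt_conv a (fun i => b i + c i) N = alt_conv a b N + alt_conv a c N.
Proof. by rewrite /alt_conv -big_split; apply: eq_bigr => i _ /=; ring. Qed.

Section Support.
Variables (d : nat -> R) (m : nat).
Hypothesis d_lt : forall j, (j < m)%N -> d j = 0.

Lemma alt_conv_supp_lt a N : (N < m)%N -> alt_conv a d N = 0.
Proof. by move=> N_lt; rewrite /alt_conv big1 // => i _; rewrite d_lt ?mulr0 //; lia. Qed.

Lemma alt_conv_suppE a N : (m <= N)%N ->
  alt_conv a d N = \sum_(i < (N - m).+1) (-1) ^+ i * a i * d (N - i)%N.
Proof.
move=> m_le; rewrite /alt_conv.
rewrite [RHS](big_ord_widen N.+1 (fun i => (-1) ^+ i * a i * d (N - i)%N)) ?ltnS ?leq_subr //.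
rewrite [RHS]big_mkcond; apply: eq_bigr => i _; case: ifP => // /negbT.
by rewrite -leqNgt => ?; rewrite d_lt ?mulr0 //; have := ltn_ord i; lia.
Qed.

Lemma alt_conv_supp_sqr N : (N < m.*2)%N -> alt_conv d d N = 0.
Proof.
move=> N_lt; rewrite /alt_conv big1 // => i _.
by have [?|?] := ltnP i m; [rewrite (d_lt (j := i)) | rewrite (d_lt (j := N - i))];
  rewrite ?(mulr0, mul0r) //; lia.
Qed.

Lemma alt_conv_perturb a N :
    (forall i, a i = exp_coef i + d i) -> ~~ odd N -> (0 < N < m.*2)%N ->
  alt_conv a a N = 2 * alt_conv exp_coef d N.
Proof.
move=> aE N_even /andP[N_gt0 N_lt].
have -> : alt_conv a a N = alt_conv (fun i => exp_coef i + d i) (fun i => exp_coef i + d i) N.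
  by apply: eq_bigr => i _; rewrite !aE.
rewrite alt_convDl !alt_convDr alt_conv_exp_coef // alt_conv_supp_sqr //.
by rewrite (alt_convC exp_coef d) -signr_odd (negbTE N_even) mul1r; ring.
Qed.

End Support.

Lemma bcoef_alt_conv a s k : (forall i, (s < i)%N -> a i = 0) -> (k <= s)%N ->
  bcoef a s k = (-1) ^+ k * alt_conv a a k.*2.
Proof.
move=> a_gt k_le; rewrite /bcoef /alt_conv max0n mulr_sumr.
rewrite -(big_mkord xpredT (fun i => (-1) ^+ k * ((-1) ^+ i * a i * a (k.*2 - i)%N))).
rewrite [RHS](big_cat_nat _ (n := k.*2 - s)) //=; last by lia.
rewrite [X in _ + X](big_cat_nat _ (n := (minn k.*2 s).+1)) /=; [|lia|lia].
rewrite [X in X + _]big_nat_cond [X in X + _]big1; last first.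
  by move=> i /andP[/andP[_ ?] _]; rewrite (a_gt (k.*2 - i)%N) ?mulr0 //; lia.
rewrite [X in _ + (_ + X)]big_nat_cond [X in _ + (_ + X)]big1; last first.
  by move=> i /andP[/andP[? ?] _]; rewrite (a_gt i) ?(mulr0, mul0r) //; lia.
by rewrite add0r addr0; apply: eq_big_nat => i _; rewrite exprD; ring.
Qed.

End AlternatingConvolution.

Section ExplicitScheme.
Variables (R : realFieldType) (s : nat).
Hypothesis s_gt1 : (1 < s)%N.

Definition rk_corr : R := 3 * (exp_coef R s.+2 - exp_coef R s.+1).

Definition rk_defect j : R :=
  if (j < s.-1)%N then 0 else if (j <= s)%N then rk_corr else - exp_coef R j.

Lemma rk_coefE i : rk_coef R s i = exp_coef R i + rk_defect i.
Proof.
rewrite /rk_coef /rk_defect /rk_corr /exp_coef.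
case: eqP => [->|i_neq0]; first by rewrite ifT ?fact0 ?invr1 ?addr0 //; lia.
case: ifP => [i_le|i_gt]; first by rewrite ifT ?addr0 //; lia.
case: eqP => [->|i_neq]; first by rewrite ltnn leq_pred; ring.
case: eqP => [->|i_neq']; first by rewrite ifF ?leqnn; [ring | lia].
by rewrite ifF ?ifF ?addrN //; lia.
Qed.

Lemma rk_defect_lt j : (j < s.-1)%N -> rk_defect j = 0.
Proof. by rewrite /rk_defect => ->. Qed.

Lemma rk_defect_predn : rk_defect s.-1 = rk_corr.
Proof. by rewrite /rk_defect ltnn leq_pred. Qed.

Lemma rk_defect_s : rk_defect s = rk_corr.
Proof. by rewrite /rk_defect ifF ?leqnn //; lia. Qed.

Lemma rk_defect_gt j : (s < j)%N -> rk_defect j = - exp_coef R j.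
Proof. by move=> s_lt; rewrite /rk_defect ifF ?ifF //; lia. Qed.

Lemma rk_coef_gt i : (s < i)%N -> rk_coef R s i = 0.
Proof. by move=> s_lt; rewrite rk_coefE rk_defect_gt ?addrN. Qed.

Lemma rk_corr_lt0 : rk_corr < 0.
Proof.
rewrite pmulr_rlt0 // subr_lt0 exp_coefS ltr_pdivrMr ?ltr0n //.
by rewrite ltr_pMr ?ltr1n // /exp_coef invr_gt0 ltr0n fact_gt0.
Qed.

Lemma conv_defect_s : alt_conv (exp_coef R) rk_defect s = 0.
Proof.
rewrite (alt_conv_suppE rk_defect_lt) ?leq_pred // (_ : s - s.-1 = 1)%N; last lia.
rewrite !big_ord_recr big_ord0 /= subn0 subn1 rk_defect_s rk_defect_predn.
by rewrite exp_coefS exp_coef0; field.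
Qed.

Lemma conv_defect_s2 : alt_conv (exp_coef R) rk_defect s.+2 = 0.
Proof.
rewrite (alt_conv_suppE rk_defect_lt); last lia.
rewrite (_ : s.+2 - s.-1 = 3)%N; last lia.
rewrite !big_ord_recr big_ord0 /= !subSS !subn0 subn1 rk_defect_s rk_defect_predn.
rewrite !rk_defect_gt /rk_corr ?exp_coefS ?exp_coef0; [|lia..].
by field; rewrite !lt0r_neq0 ?addr_gt0 ?ltr0n //; lia.
Qed.

Lemma conv_defect_s4 : alt_conv (exp_coef R) rk_defect s.+4 =
  (s%:R - 1) * exp_coef R s / (15 * (s%:R + 2) * (s%:R + 4)).
Proof.
rewrite (alt_conv_suppE rk_defect_lt); last lia.
rewrite (_ : s.+4 - s.-1 = 5)%N; last lia.
rewrite !big_ord_recr big_ord0 /= !subSS !subn0 subn1 rk_defect_s rk_defect_predn.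
rewrite !rk_defect_gt /rk_corr ?exp_coefS ?exp_coef0; [|lia..].
by field; rewrite !lt0r_neq0 ?addr_gt0 ?ltr0n //; lia.
Qed.

Lemma rk_coef_order : is_order (rk_coef R s) s (s - 2).
Proof.
split=> [|k /andP[_ k_le]|_]; first exact: leq_subr.
  by rewrite rk_coefE rk_defect_lt ?addr0 //; lia.
rewrite (_ : (s - 2).+1 = s.-1); last lia.
rewrite rk_coefE rk_defect_predn => /(canRL (addKr _)).
by rewrite addrC subrr => corr0; move: rk_corr_lt0; rewrite corr0 ltxx.
Qed.

Hypothesis s_even : ~~ odd s.

Lemma bcoef_rk_coef_eq0 k : (4 < s)%N -> (0 < k)%N -> (k.*2 <= s.+2)%N ->
  bcoef (rk_coef R s) s k = 0.
Proof.
move=> s_gt4 k_gt0 k_le.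
rewrite bcoef_alt_conv; [|exact: rk_coef_gt|lia].
rewrite (alt_conv_perturb rk_defect_lt rk_coefE) ?odd_double //; last lia.
have [k_lt|k_ge] := ltnP k.*2 s.-1; first by rewrite (alt_conv_supp_lt rk_defect_lt) ?mulr0.
have s_half := even_halfK s_even.
have [->|->] : k.*2 = s \/ k.*2 = s.+2 by lia.
  by rewrite conv_defect_s !mulr0.
by rewrite conv_defect_s2 !mulr0.
Qed.

Lemma bcoef_rk_coef_neq0 : (6 < s)%N -> bcoef (rk_coef R s) s (s./2).+2 != 0.
Proof.
move=> s_gt6; have s_half := even_halfK s_even.
rewrite bcoef_alt_conv; [|exact: rk_coef_gt|lia].
rewrite (alt_conv_perturb rk_defect_lt rk_coefE) ?odd_double //; last lia.
rewrite !doubleS s_half conv_defect_s4 mulf_neq0 ?signr_eq0 // lt0r_neq0 //.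
have natr_s_gt1 : 1 < s%:R :> R by rewrite ltr1n; lia.
by rewrite mulr_gt0 ?divr_gt0 ?mulr_gt0 ?ltr0n ?fact_gt0 //; lra.
Qed.

End ExplicitScheme.

Lemma bcoef_rk_coef6 (R : realFieldType) : bcoef (rk_coef R 6) 6 5 != 0.
Proof.
rewrite bcoef_alt_conv //; last exact: rk_coef_gt.
rewrite mulf_neq0 ?signr_eq0 // /alt_conv !big_ord_recr big_ord0 /= /rk_coef /=.
rewrite !factS fact0 !natrM.
apply/eqP => value0; have : 5 / (27 * 128 * 128) = 0 :> R by rewrite -value0; field.
by apply/eqP; rewrite mulf_eq0 invr_eq0 !mulf_eq0 !pnatr_eq0.
Qed.

Theorem proposition4 (R : realFieldType) (s : nat) :
  (4 < s)%N -> ~~ odd s ->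
  is_order (rk_coef R s) s (s - 2) /\ is_energy_accuracy (rk_coef R s) s (s + 3).
Proof.
move=> s_gt4 s_even; have s_gt1 : (1 < s)%N by lia.
have s_half := even_halfK s_even.
split; first exact: rk_coef_order.
exists (s./2).+2; split; [lia | apply/eqP | | lia].
  have [s6 | s_gt6] : s = 6 \/ (6 < s)%N by lia.
    by rewrite s6; apply: bcoef_rk_coef6.
  exact: bcoef_rk_coef_neq0.
by move=> k /andP[k_gt0 k_lt]; apply: bcoef_rk_coef_eq0 => //; lia.
Qed.
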